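(* Let $\Gamma=(V,E)$ be a finite, simple, acyclic, modular directed graph, and let $H\subseteq E$ be a set of edges that is ample and connected. Then $H$ is sufficient, i.e. the completion $\hat H$ of $H$ contains a directed path from a source of $\Gamma$ to a sink of $\Gamma$.
   Context: A directed graph $\Gamma=(V,E)$ assigns to each edge $e$ a tail $t(e)$ and a head $h(e)$; it is simple if edges with the same tail and head coincide, and acyclic if it has no directed path of positive length from a vertex to itself. A directed (positive) path is a sequence of edges $e_1,\dots,e_k$ with $t(e_{i+1})=h(e_i)$; a vertex is regarded as joined to itself by the path of length $0$. A source is a vertex that is the head of no edge; a sink is a vertex that is the tail of no edge. $\Gamma$ is modular if (1) for any two distinct edges $e_1,e_2$ with a common tail there exist edges $f_1,f_2$ with a common head and $h(e_i)=t(f_i)$, $i=1,2$; and (2) for any two distinct edges $h_1,h_2$ with a common head there exist edges $g_1,g_2$ with a common tail and $h(g_i)=t(h_i)$, $i=1,2$. D-operation: from a pair of distinct edges $e_1,e_2$ with a common tail, any pair of edges $f_1,f_2$ with a common head and $h(e_i)=t(f_i)$ is obtained. U-operation: from a pair of distinct edges $f_1',f_2'$ with a common head, any pair $e_1',e_2'$ with a common tail and $h(e_i')=t(f_i')$ is obtained. A set $E_0\subseteq E$ is complete if every result of any D- or U-operation applied to edges of $E_0$ lies in $E_0$; the completion $\hat F$ of $F\subseteq E$ is the smallest complete set containing $F$. A set of edges is sufficient if its completion contains a directed path all of whose edges lie in it, from a source to a sink of $\Gamma$. For $G\subseteq E$ let $V(G)$ be the set of heads and tails of edges in $G$. A set $W\subseteq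 V$ is ample if (1) for every non-sink vertex $v$ there is $u\in W$ such that there is no directed path in $\Gamma$ from $u$ to $v$, and (2) for every non-source vertex $v$ there is $w\in W$ such that there is no directed path in $\Gamma$ from $v$ to $w$; a set of edges $G$ is ample if $V(G)$ is ample. A set of edges $G$ is connected if the undirected graph with vertex set $V(G)$ and edge set $G$ (directions forgotten) is connected. *)

From mathcomp Require Import all_boot.
From Stdlib Require Import Relations.Relation_Operators.
Set Implicit Arguments. Unset Strict Implicit. Unset Printing Implicit Defensive.

Section DiGraph.
Variables (V E : finType) (t h : E -> V).

Definition dstep (u v : V) : Prop := exists e, t e = u /\ h e = v.
Definition reach (u v : V) : Prop := clos_refl_trans V dstep u v.

Definition simple_graph : Prop :=
  forall e1 e2 : E, t e1 = t e2 -> h e1 = h e2 -> e1 = e2.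
Definition acyclic : Prop := forall v : V, ~ clos_trans V dstep v v.

Definition is_source (v : V) : Prop := forall e : E, h e <> v.
Definition is_sink (v : V) : Prop := forall e : E, t e <> v.

Definition modular : Prop :=
  (forall e1 e2 : E, e1 <> e2 -> t e1 = t e2 ->
     exists f1 f2 : E, h f1 = h f2 /\ h e1 = t f1 /\ h e2 = t f2) /\
  (forall h1 h2 : E, h1 <> h2 -> h h1 = h h2 ->
     exists g1 g2 : E, t g1 = t g2 /\ h g1 = t h1 /\ h g2 = t h2).

(* closure under D- and U-operations *)
Definition complete (E0 : {set E}) : Prop :=
  (forall e1 e2 f1 f2 : E, e1 \in E0 -> e2 \in E0 -> e1 <> e2 -> t e1 = t e2 ->
     h f1 = h f2 -> h e1 = t f1 -> h e2 = t f2 -> f1 \in E0 /\ f2 \in E0) /\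
  (forall f1 f2 e1 e2 : E, f1 \in E0 -> f2 \in E0 -> f1 <> f2 -> h f1 = h f2 ->
     t e1 = t e2 -> h e1 = t f1 -> h e2 = t f2 -> e1 \in E0 /\ e2 \in E0).

Definition in_completion (F : {set E}) (e : E) : Prop :=
  forall E0 : {set E}, F \subset E0 -> complete E0 -> e \in E0.

Definition consec (a b : E) : bool := h a == t b.

Definition sufficient (F : {set E}) : Prop :=
  exists (e : E) (s : seq E),
    path consec e s /\ is_source (t e) /\ is_sink (h (last e s)) /\
    (forall x, x \in e :: s -> in_completion F x).

Definition vert_of (G : {set E}) (v : V) : Prop :=
  exists2 e, e \in G & (t e = v \/ h e = v).

Definition ample_vset (W : V -> Prop) : Prop :=
  (forall v, ~ is_sink v -> exists u, W u /\ ~ reach u v) /\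
  (forall v, ~ is_source v -> exists w, W w /\ ~ reach v w).

Definition ample (G : {set E}) : Prop := ample_vset (vert_of G).

Definition ustep (G : {set E}) (u v : V) : Prop :=
  exists2 e, e \in G & ((t e = u /\ h e = v) \/ (t e = v /\ h e = u)).

Definition connected (G : {set E}) : Prop :=
  (exists v, vert_of G v) /\
  (forall u v, vert_of G u -> vert_of G v -> clos_refl_trans V (ustep G) u v).

End DiGraph.

(* Let C be the completion of H.  If a vertex v has no outgoing C-edge, then the
   set of vertices with a C-path to v is closed under C-edges in both directions:
   for an edge e leaving a C-ancestor x of v along a C-path starting with e0 <> e,
   modularity gives edges f1, f2 from h e0 and h e to a common head, D-closure
   puts them in C, and induction on the length of the path shows that h e is a
   C-ancestor of v.  As H is connected, every vertex of H then reaches v, which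
   ampleness forbids unless v is a sink.  Hence, starting from an edge of H and
   repeatedly taking outgoing C-edges, one stays in the C-component of H and, by
   acyclicity, ends at a sink.  Reversing all edges exchanges D- and U-operations
   and sources and sinks while preserving every hypothesis, so the same argument
   yields a C-path back to a source. *)

From Stdlib Require Import Relations.Relation_Operators Relations.Operators_Properties.
From Stdlib Require Import Wellfounded.Inclusion Arith.Wf_nat.
From mathcomp Require Import all_boot boolp.
Set Implicit Arguments. Unset Strict Implicit. Unset Printing Implicit Defensive.

Lemma clos_refl_trans_mono (T : Type) (R1 R2 : T -> T -> Prop) :
  (forall x y, R1 x y -> R2 x y) ->
  forall x y, clos_refl_trans T R1 x y -> clos_refl_trans T R2 x y.
Proof.
move=> R12 x y; elim=> [u v /R12|u|u v w _ IHuv _ IHvw]; first exact: rt_step.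
  exact: rt_refl.
exact: rt_trans IHuv IHvw.
Qed.

Lemma clos_refl_trans_flip (T : Type) (R1 R2 : T -> T -> Prop) :
  (forall x y, R1 x y -> R2 y x) ->
  forall x y, clos_refl_trans T R1 x y -> clos_refl_trans T R2 y x.
Proof.
move=> R12 x y; elim=> [u v /R12|u|u v w _ IHuv _ IHvw]; first exact: rt_step.
  exact: rt_refl.
exact: rt_trans IHvw IHuv.
Qed.

Lemma clos_trans_flip (T : Type) (R1 R2 : T -> T -> Prop) :
  (forall x y, R1 x y -> R2 y x) ->
  forall x y, clos_trans T R1 x y -> clos_trans T R2 y x.
Proof.
move=> R12 x y; elim=> [u v /R12|u v w _ IHuv _ IHvw]; first exact: t_step.
exact: t_trans IHvw IHuv.
Qed.

Section Reversal.
Variables (V E : finType) (t h : E -> V).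

Lemma dstep_rev u v : dstep h t u v -> dstep t h v u.
Proof. by case=> e [<- <-]; exists e. Qed.

Lemma reach_rev u v : reach h t u v -> reach t h v u.
Proof. exact/clos_refl_trans_flip/dstep_rev. Qed.

Lemma acyclic_rev : acyclic t h -> acyclic h t.
Proof. by move=> acyc v /(clos_trans_flip (@dstep_rev)); apply: acyc. Qed.

Lemma modular_rev : modular t h -> modular h t.
Proof.
case=> modD modU; split=> e1 e2 ne12 e12.
  by have [g1 [g2 [? [? ?]]]] := modU e1 e2 ne12 e12; exists g1, g2.
by have [f1 [f2 [? [? ?]]]] := modD e1 e2 ne12 e12; exists f1, f2.
Qed.

Lemma complete_rev (C : {set E}) : complete t h C -> complete h t C.
Proof.
case=> closedD closedU; split=> e1 e2 f1 f2 e1C e2C ne12 e12 f12 ef1 ef2.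
  exact: closedU ne12 e12 f12 (esym ef1) (esym ef2).
exact: closedD ne12 e12 f12 (esym ef1) (esym ef2).
Qed.

Lemma vert_of_rev (G : {set E}) v : vert_of h t G v <-> vert_of t h G v.
Proof. by split; case=> e eG ?; exists e => //; tauto. Qed.

Lemma ample_rev (G : {set E}) : ample t h G -> ample h t G.
Proof.
case=> amp_sink amp_source; split=> v nv.
  have [w [Gw nvw]] := amp_source v nv.
  by exists w; split=> [|/reach_rev //]; exact/vert_of_rev.
have [u [Gu nuv]] := amp_sink v nv.
by exists u; split=> [|/reach_rev //]; exact/vert_of_rev.
Qed.

Lemma ustep_rev (G : {set E}) u v : ustep h t G u v <-> ustep t h G u v.
Proof. by split; case=> e eG ?; exists e => //; tauto. Qed.

Lemma connected_rev (G : {set E}) : connected t h G -> connected h t G.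
Proof.
case=> [[v Gv] linked]; split; first by exists v; exact/vert_of_rev.
move=> x y /vert_of_rev Gx /vert_of_rev Gy.
by apply: clos_refl_trans_mono (linked x y Gx Gy) => ? ? /ustep_rev.
Qed.

End Reversal.

Section Completion.
Variables (V E : finType) (t h : E -> V) (F : {set E}).

Definition completion : {set E} := [set e | `[< in_completion t h F e >]].

Lemma completionP e : reflect (in_completion t h F e) (e \in completion).
Proof. by rewrite inE; exact: asboolP. Qed.

Lemma sub_completion : F \subset completion.
Proof. by apply/subsetP=> e eF; apply/completionP=> E0 /subsetP FE0 _; exact: FE0. Qed.

Lemma completion_min (E0 : {set E}) :
  F \subset E0 -> complete t h E0 -> completion \subset E0.
Proof. by move=> FE0 E0c; apply/subsetP=> e /completionP; apply. Qed.

Lemma completion_complete : complete t h completion.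
Proof.
have in_pair y1 y2 :
    (forall E0 : {set E}, F \subset E0 -> complete t h E0 ->
       y1 \in E0 /\ y2 \in E0) ->
  y1 \in completion /\ y2 \in completion.
  by move=> yE0; split; apply/completionP=> E0 FE0 E0c; case: (yE0 E0 FE0 E0c).
split=> x1 x2 y1 y2 x1F x2F *; apply: in_pair => E0 FE0 E0c;
  have /subsetP sub := completion_min FE0 E0c; case: E0c => closedD closedU.
- exact: closedD (sub _ x1F) (sub _ x2F) _ _ _ _ _.
- exact: closedU (sub _ x1F) (sub _ x2F) _ _ _ _ _.
Qed.

End Completion.

Section Ancestors.
Variables (V E : finType) (t h : E -> V) (C : {set E}).
Hypotheses (modul : modular t h) (C_complete : complete t h C).

Definition dstep_in (u v : V) : Prop := exists2 e, e \in C & t e = u /\ h e = v.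
Definition reach_in : V -> V -> Prop := clos_refl_trans V dstep_in.
Definition linked_in : V -> V -> Prop := clos_refl_trans V (ustep t h C).

Lemma reach_in_reach u v : reach_in u v -> reach t h u v.
Proof. by apply: clos_refl_trans_mono => x y [e _ tehe]; exists e. Qed.

Section Sink.
Variable v : V.
Hypothesis no_out_edge : forall e, e \in C -> t e <> v.

Lemma reach_in_head : forall e, e \in C -> reach_in (t e) v -> reach_in (h e) v.
Proof.
suff from_tail x y : clos_refl_trans_1n V dstep_in x y -> y = v ->
    forall e, e \in C -> t e = x -> reach_in (h e) v.
  by move=> e eC /clos_rt_rt1n_iff /from_tail; apply.
elim=> {x y} [x ->|x y z [e0 e0C [te0 he0]] yz IHy zv] e eC tex.
  by case: (no_out_edge eC tex).
subst z; have {}IHy := IHy erefl.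
have [<-|/eqP ne0] := eqVneq e0 e; first by rewrite he0; exact/clos_rt_rt1n_iff.
have te0e : t e0 = t e by rewrite te0 tex.
have [f1 [f2 [hf12 [hef1 hef2]]]] := modul.1 e0 e ne0 te0e.
have [f1C f2C] := C_complete.1 e0 e f1 f2 e0C eC ne0 te0e hf12 hef1 hef2.
apply: rt_trans (IHy f1 f1C (etrans (esym hef1) he0)).
by rewrite hf12; apply: rt_step; exists f2.
Qed.

Lemma reach_in_linked u w : linked_in u w -> reach_in u v -> reach_in w v.
Proof.
elim=> [x y [e eC [[<- <-]|[<- <-]]]|//|x y z _ IHxy _ IHyz]; last by auto.
  exact: reach_in_head.
by apply: rt_trans; apply: rt_step; exists e.
Qed.

End Sink.

Lemma out_edge_of_linked u v :
  ~ reach t h u v -> linked_in v u -> exists2 e, e \in C & t e = v.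
Proof.
move=> nuv vu.
have [/existsP[e /andP[eC /eqP <-]]|no_out] := boolP [exists e in C, t e == v].
  by exists e.
case: nuv; apply/reach_in_reach/(reach_in_linked _ vu)/rt_refl => e eC tev.
by case/existsP: no_out; exists e; rewrite eC tev eqxx.
Qed.

End Ancestors.

Section Descendants.
Variables (V E : finType) (t h : E -> V).
Hypothesis acyc : acyclic t h.

Definition descendants (x : V) : {set V} := [set y | `[< reach t h x y >]].

Lemma descendants_proper x y : dstep t h x y -> descendants y \proper descendants x.
Proof.
move=> xy; apply/properP; split.
  apply/subsetP=> z; rewrite !inE => /asboolP yz.
  by apply/asboolP; apply: rt_trans yz; exact: rt_step.
exists x; rewrite inE; first exact/asboolP/rt_refl.
by apply/asboolPn=> yx; apply: acyc; apply: clos_rt_t yx _; exact: t_step.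
Qed.

Lemma acyclic_wf : well_founded (fun y x => dstep t h x y).
Proof.
apply: (wf_incl _ _ (ltof V (fun x => #|descendants x|))); last exact: well_founded_ltof.
by move=> y x /descendants_proper/proper_card/ltP.
Qed.

End Descendants.

Section ExtendToSink.
Variables (V E : finType) (t h : E -> V) (H C : {set E}).
Hypotheses (acyc : acyclic t h) (modul : modular t h) (C_complete : complete t h C).
Hypotheses (HC : H \subset C) (amp : ample t h H) (conn : connected t h H).

Definition extends_to_sink (e : E) : Prop :=
  exists s, [/\ path (consec t h) e s, is_sink t (h (last e s)) & {subset s <= C}].

Definition in_component (x : V) : Prop :=
  exists2 u, vert_of t h H u & linked_in t h C x u.

Lemma in_component_head e : e \in C -> in_component (t e) -> in_component (h e).
Proof.
move=> eC [u Hu teu]; exists u => //.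
by apply: rt_trans teu; apply: rt_step; exists e => //; right.
Qed.

Lemma out_edge_in_component x :
  in_component x -> ~ is_sink t x -> exists2 e, e \in C & t e = x.
Proof.
move=> [u Hu xu] /amp.1[w [Hw nwx]]; apply: (out_edge_of_linked modul C_complete nwx).
apply: rt_trans xu _; apply: clos_refl_trans_mono (conn.2 u w Hu Hw) => y z [e eH yz].
by exists e => //; exact: (subsetP HC).
Qed.

Lemma extends_to_sink_in_component e :
  e \in C -> in_component (h e) -> extends_to_sink e.
Proof.
suff ext x : forall e, h e = x -> e \in C -> in_component x -> extends_to_sink e.
  by apply: ext.
elim/(well_founded_ind (acyclic_wf acyc)): x => x IHx {}e hex eC comp_x.
have [sink_x|/(out_edge_in_component comp_x)[e' e'C te'x]] := asboolP (is_sink t x).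
  by exists [::]; rewrite /= hex.
have xe' : dstep t h x (h e') by exists e'.
have comp_e' : in_component (h e') by apply: in_component_head; rewrite ?te'x.
have [s [path_s sink_s sC]] := IHx (h e') xe' e' erefl e'C comp_e'.
exists (e' :: s); split=> //=; first by rewrite /consec hex te'x eqxx.
by move=> y; rewrite inE => /predU1P[->|/sC].
Qed.

End ExtendToSink.

Lemma sufficient_of_extensions (V E : finType) (t h : E -> V) (F : {set E}) e :
  let C := completion t h F in
  e \in C -> extends_to_sink t h C e -> extends_to_sink h t C e -> sufficient t h F.
Proof.
move=> C eC [sf [path_f sink_f sfC]] [sb [path_b source_b sbC]].
have rev_sb : last e sb :: rev (belast e sb) = rev (e :: sb).
  by rewrite [e :: sb]lastI rev_rcons.
have last_rev : last (last e sb) (rev (belast e sb)) = e.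
  by rewrite -(last_cons e) rev_sb rev_cons last_rcons.
exists (last e sb), (rev (belast e sb) ++ sf); split; last split.
- rewrite cat_path last_rev path_f andbT rev_path.
  by rewrite (eq_path (e' := consec h t)) // => ? ?; exact: eq_sym.
- exact: source_b.
- split=> [|x]; first by rewrite last_cat last_rev.
  rewrite -cat_cons rev_sb mem_cat mem_rev inE => x_path; apply/completionP.
  by case/orP: x_path => [/predU1P[->|/sbC]|/sfC].
Qed.

Theorem theorem3p2p4 (V E : finType) (t h : E -> V) (H : {set E}) :
  simple_graph t h -> acyclic t h -> modular t h ->
  ample t h H -> connected t h H ->
  sufficient t h H.
Proof.
move=> _ acyc modul amp conn.
have [[v [e0 e0H _]] _] := conn.
have HC := sub_completion t h H.
have C_complete := completion_complete t h H.
have e0C : e0 \in completion t h H by exact: (subsetP HC).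
apply: (sufficient_of_extensions e0C).
- apply: (extends_to_sink_in_component acyc modul C_complete HC amp conn e0C).
  by exists (h e0); [exists e0 => //; right | exact: rt_refl].
- apply: (extends_to_sink_in_component (acyclic_rev acyc) (modular_rev modul)
    (complete_rev C_complete) HC (ample_rev amp) (connected_rev conn) e0C).
  by exists (t e0); [exists e0 => //; right | exact: rt_refl].
Qed.
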